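(* Let $X$ be an infinite dimensional real Banach space and let $E \subset X^\ast$ be a weak$^\ast$-closed and bounded set having no vector of maximum length, i.e. there is no $e\in E$ with $\|e\|=\sup\{\|e'\|: e'\in E\}$. Then the weak$^\ast$-closed convex hull $K$ of $E$ has no vector of maximum length, i.e. there is no $k\in K$ with $\|k\|=\sup\{\|k'\|:k'\in K\}$. Equivalently: if $E$ is not remotal from a point $x^\ast\in X^\ast$, then neither is $K$.
   Context: For a bounded set $E$ in a Banach space $Z$ and $z\in Z$, let $D(z,E)=\sup\{\|z-e\|: e\in E\}$. $E$ is called remotal from $z$ if there exists $e_0\in E$ with $\|z-e_0\|=D(z,E)$ (such $e_0$ is a farthest point of $E$ from $z$); $E$ is remotal if it is remotal from every point of $Z$. The weak$^\ast$-closed convex hull of $E\subset X^\ast$ is the closure of the convex hull of $E$ in the weak$^\ast$ topology $\sigma(X^\ast,X)$. *)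

From Stdlib Require Import Reals Lra ClassicalEpsilon.
Open Scope R_scope.

Record Banach := {
  vec :> Type;
  vzero : vec;
  vadd : vec -> vec -> vec;
  vopp : vec -> vec;
  vscal : R -> vec -> vec;
  vnorm : vec -> R;
  vadd_assoc : forall x y z, vadd x (vadd y z) = vadd (vadd x y) z;
  vadd_comm : forall x y, vadd x y = vadd y x;
  vadd_0 : forall x, vadd x vzero = x;
  vadd_opp : forall x, vadd x (vopp x) = vzero;
  vscal_assoc : forall a b x, vscal a (vscal b x) = vscal (a * b) x;
  vscal_1 : forall x, vscal 1 x = x;
  vscal_distr_v : forall a x y, vscal a (vadd x y) = vadd (vscal a x) (vscal a y);
  vscal_distr_s : forall a b x, vscal (a + b) x = vadd (vscal a x) (vscal b x);
  vnorm_nonneg : forall x, 0 <= vnorm x;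
  vnorm_eq0 : forall x, vnorm x = 0 -> x = vzero;
  vnorm_scal : forall a x, vnorm (vscal a x) = Rabs a * vnorm x;
  vnorm_triangle : forall x y, vnorm (vadd x y) <= vnorm x + vnorm y;
  vcomplete : forall u : nat -> vec,
    (forall eps, 0 < eps -> exists N, forall m n, (N <= m)%nat -> (N <= n)%nat ->
        vnorm (vadd (u m) (vopp (u n))) < eps) ->
    exists l, forall eps, 0 < eps -> exists N, forall n, (N <= n)%nat ->
        vnorm (vadd (u n) (vopp l)) < eps
}.

Arguments vzero {_}.
Arguments vadd {_} _ _.
Arguments vscal {_} _ _.
Arguments vnorm {_} _.

Fixpoint lincomb {X : Banach} (n : nat) (c : nat -> R) (v : nat -> X) : X :=
  match n with
  | O => vzero
  | S k => vadd (lincomb k c v) (vscal (c k) (v k))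
  end.

Definition infinite_dimensional (X : Banach) : Prop :=
  forall n : nat, exists v : nat -> X,
    forall c : nat -> R, lincomb n c v = vzero -> forall i, (i < n)%nat -> c i = 0.

Definition in_dual {X : Banach} (f : X -> R) : Prop :=
  (forall x y, f (vadd x y) = f x + f y) /\
  (forall a x, f (vscal a x) = a * f x) /\
  (exists M, forall x, Rabs (f x) <= M * vnorm x).

(* Supremum of a set of reals (meaningful when the set is nonempty and bounded above). *)
Definition sup_set (P : R -> Prop) : R :=
  epsilon (inhabits 0) (fun r => is_lub P r).

Definition dnorm {X : Banach} (f : X -> R) : R :=
  sup_set (fun t => exists x, vnorm x <= 1 /\ t = Rabs (f x)).

Definition dual_subset {X : Banach} (S : (X -> R) -> Prop) : Prop :=
  forall f, S f -> in_dual f.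

Definition dual_bounded {X : Banach} (S : (X -> R) -> Prop) : Prop :=
  exists M, forall f, S f -> dnorm f <= M.

Fixpoint rsum (n : nat) (a : nat -> R) : R :=
  match n with O => 0 | S k => rsum k a + a k end.

(* weak* closure of S inside X^*: basic weak* neighbourhoods of f are given by
   finitely many points x_0..x_{n-1} and eps > 0. *)
Definition wstar_closure {X : Banach} (S : (X -> R) -> Prop) : (X -> R) -> Prop :=
  fun f => in_dual f /\
    forall (n : nat) (xs : nat -> X) (eps : R), 0 < eps ->
      exists g, S g /\ forall i, (i < n)%nat -> Rabs (f (xs i) - g (xs i)) < eps.

Definition wstar_closed {X : Banach} (S : (X -> R) -> Prop) : Prop :=
  forall f, wstar_closure S f -> S f.

Definition conv_hull {X : Banach} (S : (X -> R) -> Prop) : (X -> R) -> Prop :=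
  fun g => exists (n : nat) (c : nat -> R) (e : nat -> X -> R),
    (forall i, (i < n)%nat -> 0 <= c i /\ S (e i)) /\
    rsum n c = 1 /\
    forall x, g x = rsum n (fun i => c i * e i x).

Definition wstar_closed_conv_hull {X : Banach} (S : (X -> R) -> Prop) :=
  wstar_closure (conv_hull S).

Definition has_max_length {X : Banach} (S : (X -> R) -> Prop) : Prop :=
  exists s, S s /\ dnorm s = sup_set (fun t => exists s', S s' /\ t = dnorm s').

(* Let M be the supremum of the norms on E; it is not attained, so E is covered by the levels
   {e : ||e|| <= M - 1/(m+1)}.  Given k in K we show ||k|| < M, a Milman-type argument:
   - Weak*-compactness (Banach-Alaoglu, through ultrafilters) and Zorn's lemma give a minimal
     weak*-closed subset E' of E whose weak*-closed convex hull still contains k.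
   - By Baire's theorem on the compact set E', some level has nonempty relative interior:
     there is a weak*-neighbourhood P of a point e0 of E' such that E' meets P inside a level.
   - Write k as the limit of a net of convex combinations of points of E' and follow the mass
     these combinations put on P.  If it does not tend to 0, then ||k|| < M.  If it tends to 0,
     then k lies in the closed convex hull of the points of E' away from e0, a closed proper
     subset of E', contradicting minimality. *)
From Stdlib Require Import Reals Lra Lia List ClassicalEpsilon Classical
  FunctionalExtensionality PropExtensionality.
From mathcomp Require classical_sets filter.

Open Scope R_scope.

Section Eventually.
Context {I : Type} (U : (I -> Prop) -> Prop) {HU : filter.ProperFilter U}.

Lemma ev_mono (P Q : I -> Prop) : U P -> (forall i, P i -> Q i) -> U Q.
Proof. intros HP HPQ. exact (filter.filterS HPQ HP). Qed.

Lemma ev_and (P Q : I -> Prop) : U P -> U Q -> U (fun i => P i /\ Q i).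
Proof. intros HP HQ. exact (filter.filterI HP HQ). Qed.

Lemma ev_ex (P : I -> Prop) : U P -> exists i, P i.
Proof. apply filter.filter_ex. Qed.

Lemma ev_always (P : I -> Prop) : (forall i, P i) -> U P.
Proof. intros HP. apply (ev_mono (fun _ => True)); [apply filter.filterT|auto]. Qed.

Lemma ev_forall_lt (P : nat -> I -> Prop) (n : nat) :
  (forall j, (j < n)%nat -> U (P j)) -> U (fun i => forall j, (j < n)%nat -> P j i).
Proof.
  induction n as [|n IH]; intros H.
  - apply ev_always. intros i j Hj; lia.
  - apply (ev_mono (fun i => (forall j, (j < n)%nat -> P j i) /\ P n i)).
    + apply ev_and; auto.
    + intros i [H1 H2] j Hj. destruct (Nat.eq_dec j n) as [->|Hne]; auto. apply H1; lia.
Qed.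

End Eventually.

Lemma ultrafilter_on_base {I : Type} (Bs : (I -> Prop) -> Prop) :
  (exists b, Bs b) -> (forall b, Bs b -> exists i, b i) ->
  (forall b1 b2, Bs b1 -> Bs b2 -> exists b3, Bs b3 /\ forall i, b3 i -> b1 i /\ b2 i) ->
  exists U, filter.UltraFilter U /\ forall b, Bs b -> U b.
Proof.
  intros Hne Hnonempty Hdir.
  assert (HF : filter.ProperFilter (filter.filter_from Bs (fun b => b))).
  { apply filter.filter_from_proper; [apply filter.filter_from_filter; auto|exact Hnonempty].
    intros b1 b2 H1 H2. destruct (Hdir b1 b2 H1 H2) as [b3 [H3 Hb3]]. exists b3; auto. }
  destruct (filter.ultraFilterLemma HF) as [U [HU HsubU]].
  exists U; split; auto. intros b Hb. apply HsubU. exists b; auto. intros i Hi; exact Hi.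
Qed.

Lemma Rabs_le_bounds (a b : R) : Rabs a <= b -> - b <= a <= b.
Proof. unfold Rabs; destruct Rcase_abs; lra. Qed.

Definition converges {I : Type} (U : (I -> Prop) -> Prop) (a : I -> R) (l : R) : Prop :=
  forall eps, 0 < eps -> U (fun i => Rabs (a i - l) < eps).

Section Limits.
Context {I : Type} (U : (I -> Prop) -> Prop) {HU : filter.ProperFilter U}.

Lemma converges_unique (a : I -> R) (l1 l2 : R) :
  converges U a l1 -> converges U a l2 -> l1 = l2.
Proof.
  intros H1 H2. apply NNPP; intro Hne.
  set (e := Rabs (l1 - l2) / 2).
  assert (He : 0 < e).
  { assert (Hd : l1 - l2 <> 0) by lra. apply Rabs_pos_lt in Hd. unfold e; lra. }
  destruct (ev_ex U _ (ev_and U _ _ (H1 e He) (H2 e He))) as [i [Hi1 Hi2]].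
  assert (Rabs (l1 - l2) <= Rabs (a i - l1) + Rabs (a i - l2)).
  { replace (l1 - l2) with (-(a i - l1) + (a i - l2)) by ring.
    eapply Rle_trans; [apply Rabs_triang|]. rewrite Rabs_Ropp; lra. }
  unfold e in *; lra.
Qed.

Lemma converges_const (c : R) : converges U (fun _ => c) c.
Proof. intros eps He. apply (ev_always U). intros i. rewrite Rminus_diag, Rabs_R0; lra. Qed.

Lemma converges_ext (a b : I -> R) (l : R) :
  U (fun i => a i = b i) -> converges U a l -> converges U b l.
Proof.
  intros Hab Ha eps Heps. apply (ev_mono U _ _ (ev_and U _ _ Hab (Ha eps Heps))).
  intros i [H1 H2]; rewrite <- H1; auto.
Qed.

Lemma converges_plus (a b : I -> R) (la lb : R) :
  converges U a la -> converges U b lb -> converges U (fun i => a i + b i) (la + lb).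
Proof.
  intros Ha Hb eps He.
  apply (ev_mono U _ _ (ev_and U _ _ (Ha (eps/2) ltac:(lra)) (Hb (eps/2) ltac:(lra)))).
  intros i [H1 H2]. replace (a i + b i - (la + lb)) with ((a i - la) + (b i - lb)) by ring.
  eapply Rle_lt_trans; [apply Rabs_triang|]. lra.
Qed.

Lemma converges_mul (a b : I -> R) (la lb : R) :
  converges U a la -> converges U b lb -> converges U (fun i => a i * b i) (la * lb).
Proof.
  intros Ha Hb eps He.
  set (K := Rabs la + Rabs lb + 1).
  assert (HK : 0 < K) by (unfold K; pose proof (Rabs_pos la); pose proof (Rabs_pos lb); lra).
  (* each factor within d of its limit, with d <= 1 and d * K <= eps / 2 *)
  set (d := Rmin 1 (eps / (2 * K))).
  assert (Hd : 0 < d). { unfold d. apply Rmin_glb_lt; [lra|]. apply Rdiv_lt_0_compat; lra. }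
  assert (Hd1 : d <= 1) by apply Rmin_l.
  assert (Hdk : d * K <= eps / 2).
  { apply Rle_trans with (eps / (2 * K) * K).
    - apply Rmult_le_compat_r; [lra|apply Rmin_r].
    - right; field; lra. }
  apply (ev_mono U _ _ (ev_and U _ _ (Ha d Hd) (Hb d Hd))). intros i [H1 H2].
  replace (a i * b i - la * lb)
    with ((a i - la) * (b i - lb) + (a i - la) * lb + la * (b i - lb)) by ring.
  eapply Rle_lt_trans; [apply Rabs_triang|].
  eapply Rle_lt_trans; [apply Rplus_le_compat_r, Rabs_triang|].
  rewrite !Rabs_mult.
  pose proof (Rabs_pos (a i - la)). pose proof (Rabs_pos (b i - lb)).
  pose proof (Rabs_pos la). pose proof (Rabs_pos lb).
  assert (Rabs (a i - la) * Rabs (b i - lb) <= d * d) by (apply Rmult_le_compat; lra).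
  assert (Rabs (a i - la) * Rabs lb <= d * Rabs lb) by (apply Rmult_le_compat_r; lra).
  assert (Rabs la * Rabs (b i - lb) <= Rabs la * d) by (apply Rmult_le_compat_l; lra).
  assert (d * d <= d * 1) by (apply Rmult_le_compat_l; lra).
  unfold K in Hdk. nra.
Qed.

Lemma converges_abs (a : I -> R) (l : R) :
  converges U a l -> converges U (fun i => Rabs (a i)) (Rabs l).
Proof.
  intros Ha eps He. apply (ev_mono U _ _ (Ha eps He)). intros i Hi.
  eapply Rle_lt_trans; [apply Rabs_triang_inv2|]; auto.
Qed.

Lemma converges_le (a b : I -> R) (la lb : R) :
  U (fun i => a i <= b i) -> converges U a la -> converges U b lb -> la <= lb.
Proof.
  intros Hle Ha Hb. destruct (Rle_lt_dec la lb) as [H|H]; auto. exfalso.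
  set (e := (la - lb) / 2).
  assert (He : 0 < e) by (unfold e; lra).
  destruct (ev_ex U _ (ev_and U _ _ Hle (ev_and U _ _ (Ha e He) (Hb e He))))
    as [i [H1 [H2 H3]]].
  apply Rabs_def2 in H2; apply Rabs_def2 in H3. unfold e in *; lra.
Qed.

End Limits.

(* Along an ultrafilter every eventually bounded real family has a limit: the
   limit is the supremum of the reals that the family eventually exceeds. *)
Lemma ultra_limit_exists {I : Type} (U : (I -> Prop) -> Prop) (a : I -> R) (B : R) :
  filter.UltraFilter U -> U (fun i => Rabs (a i) <= B) -> exists l, converges U a l.
Proof.
  intros HU HB.
  set (P := fun t => U (fun i => t <= a i)).
  assert (Hb : bound P).
  { exists (B + 1). intros t Ht. destruct (Rle_lt_dec t (B + 1)) as [H|H]; auto.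
    exfalso. destruct (ev_ex U _ (ev_and U _ _ Ht HB)) as [i [H1 H2]].
    apply Rabs_le_bounds in H2. lra. }
  assert (Hne : exists t, P t).
  { exists (- B - 1). apply (ev_mono U _ _ HB). intros i Hi. apply Rabs_le_bounds in Hi. lra. }
  destruct (completeness P Hb Hne) as [L [HL1 HL2]].
  exists L. intros eps Heps.
  apply (ev_mono U (fun i => L - eps < a i /\ a i < L + eps)).
  2:{ intros i [H1 H2]. apply Rabs_def1; lra. }
  apply (ev_and U).
  - apply NNPP; intro Hn.
    assert (HLe : is_upper_bound P (L - eps)).
    { intros t Ht. destruct (Rle_lt_dec t (L - eps)) as [H|H]; auto. exfalso. apply Hn.
      apply (ev_mono U _ _ Ht). intros i Hi; lra. }
    specialize (HL2 _ HLe). lra.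
  - destruct (filter.in_ultra_setVsetC (fun i => a i < L + eps) HU) as [H|H]; auto.
    assert (P (L + eps)) by (apply (ev_mono U _ _ H); intros i Hi; simpl in Hi; lra).
    specialize (HL1 _ H0). lra.
Qed.

Section DualNorm.
Variable X : Banach.

Lemma vscal0 (x : X) : vscal 0 x = vzero.
Proof.
  assert (H : vscal 0 x = vadd (vscal 0 x) (vscal 0 x)).
  { rewrite <- vscal_distr_s. f_equal. ring. }
  assert (H2 : vadd (vscal 0 x) (vopp X (vscal 0 x)) = vzero) by apply vadd_opp.
  rewrite H in H2 at 1. rewrite <- vadd_assoc, vadd_opp, vadd_0 in H2. exact H2.
Qed.

Lemma vnorm0 : vnorm (@vzero X) = 0.
Proof. rewrite <- (vscal0 vzero), vnorm_scal, Rabs_R0. ring. Qed.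

Lemma dual0 (f : X -> R) : in_dual f -> f vzero = 0.
Proof. intros [_ [Hs _]]. rewrite <- (vscal0 vzero), Hs. ring. Qed.

Lemma sup_set_lub (P : R -> Prop) (m : R) : is_lub P m -> sup_set P = m.
Proof.
  intros Hm. unfold sup_set.
  destruct (epsilon_spec (inhabits 0) _ (ex_intro _ m Hm)) as [H1 H2].
  destruct Hm as [Hm1 Hm2]. apply Rle_antisym; auto.
Qed.

Lemma dnorm_lub (f : X -> R) :
  in_dual f -> is_lub (fun t => exists x, vnorm x <= 1 /\ t = Rabs (f x)) (dnorm f).
Proof.
  intros [_ [_ [Mb HMb]]].
  set (P := fun t => exists x : X, vnorm x <= 1 /\ t = Rabs (f x)).
  assert (Hb : bound P).
  { exists (Rabs Mb). intros t [x [Hx ->]]. eapply Rle_trans; [apply HMb|].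
    pose proof (vnorm_nonneg X x). pose proof (Rle_abs Mb). pose proof (Rabs_pos Mb).
    apply Rle_trans with (Rabs Mb * vnorm x); [apply Rmult_le_compat_r; lra|].
    rewrite <- (Rmult_1_r (Rabs Mb)) at 2. apply Rmult_le_compat_l; lra. }
  assert (Hne : exists t, P t).
  { exists (Rabs (f vzero)), vzero. rewrite vnorm0. split; [lra|auto]. }
  destruct (completeness _ Hb Hne) as [m Hm].
  unfold dnorm. fold P. rewrite (sup_set_lub _ m Hm). exact Hm.
Qed.

Lemma dnorm_nonneg (f : X -> R) : in_dual f -> 0 <= dnorm f.
Proof.
  intros Hf. apply Rle_trans with (Rabs (f vzero)); [apply Rabs_pos|].
  apply (dnorm_lub f Hf). exists vzero. rewrite vnorm0. split; [lra|auto].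
Qed.

Lemma dnorm_bound (f : X -> R) : in_dual f -> forall x, Rabs (f x) <= dnorm f * vnorm x.
Proof.
  intros Hf x. pose proof (vnorm_nonneg X x) as Hn.
  destruct (Req_dec (vnorm x) 0) as [H0|H0].
  - rewrite (vnorm_eq0 X x H0), (dual0 f Hf), Rabs_R0, vnorm0. lra.
  -
    assert (Hp : 0 < / vnorm x) by (apply Rinv_0_lt_compat; lra).
    set (y := vscal (/ vnorm x) x).
    assert (Hy : vnorm y = 1).
    { unfold y. rewrite vnorm_scal, Rabs_right by lra. field; lra. }
    assert (Hfy : f y = / vnorm x * f x) by apply (proj1 (proj2 Hf)).
    assert (H : Rabs (f y) <= dnorm f) by (apply (dnorm_lub f Hf); exists y; split; auto; lra).
    rewrite Hfy, Rabs_mult, Rabs_right in H by lra.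
    apply (Rmult_le_compat_r (vnorm x)) in H; [|lra].
    replace (/ vnorm x * Rabs (f x) * vnorm x) with (Rabs (f x)) in H by (field; lra). lra.
Qed.

Lemma dnorm_le (f : X -> R) (c : R) :
  in_dual f -> 0 <= c -> (forall x, Rabs (f x) <= c * vnorm x) -> dnorm f <= c.
Proof.
  intros Hf Hc H. apply (dnorm_lub f Hf).
  intros t [x [Hx ->]]. eapply Rle_trans; [apply H|].
  rewrite <- (Rmult_1_r c) at 2. apply Rmult_le_compat_l; lra.
Qed.

End DualNorm.

Lemma rsum_ext (n : nat) (a b : nat -> R) :
  (forall i, (i < n)%nat -> a i = b i) -> rsum n a = rsum n b.
Proof. induction n; simpl; intros H; auto. rewrite IHn, H; auto. Qed.

Lemma rsum_scal (n : nat) (c : R) (a : nat -> R) : rsum n (fun i => c * a i) = c * rsum n a.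
Proof. induction n; simpl; [ring|]. rewrite IHn; ring. Qed.

Lemma rsum_plus (n : nat) (a b : nat -> R) :
  rsum n (fun i => a i + b i) = rsum n a + rsum n b.
Proof. induction n; simpl; [ring|]. rewrite IHn; ring. Qed.

Lemma rsum_le (n : nat) (a b : nat -> R) :
  (forall i, (i < n)%nat -> a i <= b i) -> rsum n a <= rsum n b.
Proof. induction n; simpl; intros H; [lra|]. apply Rplus_le_compat; auto. Qed.

Lemma rsum_abs (n : nat) (a : nat -> R) : Rabs (rsum n a) <= rsum n (fun i => Rabs (a i)).
Proof.
  induction n; simpl; [rewrite Rabs_R0; lra|].
  eapply Rle_trans; [apply Rabs_triang|]. lra.
Qed.

Lemma rsum_nonneg (n : nat) (a : nat -> R) : (forall i, (i < n)%nat -> 0 <= a i) -> 0 <= rsum n a.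
Proof. induction n; simpl; intros H; [lra|]. apply Rplus_le_le_0_compat; auto. Qed.

Definition ind (P : Prop) (a : R) : R := if excluded_middle_informative P then a else 0.

Lemma rsum_split (n : nat) (P : nat -> Prop) (a : nat -> R) :
  rsum n a = rsum n (fun i => ind (P i) (a i)) + rsum n (fun i => ind (~ P i) (a i)).
Proof.
  rewrite <- rsum_plus. apply rsum_ext. intros i _. unfold ind.
  destruct (excluded_middle_informative (P i)), (excluded_middle_informative (~ P i));
    tauto || ring.
Qed.

Lemma convex_comb_close (N : nat) (c a b : nat -> R) (d : R) :
  (forall j, (j < N)%nat -> 0 <= c j) -> rsum N c = 1 ->
  (forall j, (j < N)%nat -> Rabs (a j - b j) <= d) ->
  Rabs (rsum N (fun j => c j * a j) - rsum N (fun j => c j * b j)) <= d.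
Proof.
  intros Hc Hs Hab.
  replace (rsum N (fun j => c j * a j) - rsum N (fun j => c j * b j))
    with (rsum N (fun j => c j * (a j - b j))).
  2:{ rewrite (rsum_ext N _ (fun j => c j * a j + (-1) * (c j * b j))) by (intros; ring).
      rewrite rsum_plus, rsum_scal. ring. }
  eapply Rle_trans; [apply rsum_abs|].
  apply Rle_trans with (rsum N (fun j => d * c j)); [|rewrite rsum_scal, Hs; lra].
  apply rsum_le. intros j Hj. rewrite Rabs_mult, Rabs_right by (apply Rle_ge, Hc; auto).
  rewrite Rmult_comm. apply Rmult_le_compat_r; auto.
Qed.

Definition bounded_by {X : Banach} (C : (X -> R) -> Prop) (M : R) : Prop :=
  forall g, C g -> in_dual g /\ forall x, Rabs (g x) <= M * vnorm x.

Section ConvexHull.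
Variable X : Banach.
Implicit Types S C : (X -> R) -> Prop.

Lemma conv_hull_single S (e : X -> R) : S e -> conv_hull S e.
Proof.
  intros H. exists 1%nat, (fun _ => 1), (fun _ => e). simpl.
  split; [intros i Hi; split; auto; lra|split; [ring|intros x; ring]].
Qed.

Lemma conv_hull_bounded S (M : R) : bounded_by S M -> bounded_by (conv_hull S) M.
Proof.
  intros HS g [n [c [e [He [Hc Hg]]]]].
  assert (HeS : forall i, (i < n)%nat -> in_dual (e i) /\ forall x, Rabs (e i x) <= M * vnorm x)
    by (intros i Hi; apply HS, He, Hi).
  assert (Hbound : forall x, Rabs (g x) <= M * vnorm x).
  { intros x. rewrite Hg. eapply Rle_trans; [apply rsum_abs|].
    apply Rle_trans with (rsum n (fun i => (M * vnorm x) * c i)).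
    - apply rsum_le. intros i Hi. destruct (He i Hi) as [Hci _].
      rewrite Rabs_mult, Rabs_right, Rmult_comm by lra.
      apply Rmult_le_compat_r; [lra|apply HeS, Hi].
    - rewrite rsum_scal, Hc; lra. }
  split; [split; [|split; [|exists M; exact Hbound]]|exact Hbound].
  - intros x y. rewrite !Hg, <- rsum_plus. apply rsum_ext. intros j Hj.
    rewrite (proj1 (proj1 (HeS j Hj))). ring.
  - intros a x. rewrite !Hg, <- rsum_scal. apply rsum_ext. intros j Hj.
    rewrite (proj1 (proj2 (proj1 (HeS j Hj)))). ring.
Qed.

Lemma conv_hull_restrict S (P : (X -> R) -> Prop) (N : nat) (c : nat -> R) (e : nat -> X -> R) :
  (forall j, (j < N)%nat -> 0 <= c j) -> (forall j, (j < N)%nat -> P (e j) -> S (e j)) ->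
  0 < rsum N (fun j => ind (P (e j)) (c j)) ->
  conv_hull S (fun x => rsum N (fun j => ind (P (e j)) (c j * e j x))
                        / rsum N (fun j => ind (P (e j)) (c j))).
Proof.
  intros Hc HPS Hm. set (m := rsum N (fun j => ind (P (e j)) (c j))) in *.
  (* some term satisfies P; it serves as a dummy for the discarded ones *)
  assert (Hj0 : exists j0, (j0 < N)%nat /\ P (e j0)).
  { apply NNPP; intro Hn. assert (Hm0 : m = 0).
    { unfold m. rewrite (rsum_ext N _ (fun _ => 0 * 0)), rsum_scal; [ring|].
      intros j Hj. unfold ind. destruct excluded_middle_informative; [|ring].
      exfalso; apply Hn; exists j; auto. }
    lra. }
  destruct Hj0 as [j0 [Hj0 HPj0]].
  exists N, (fun j => ind (P (e j)) (c j) / m),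
    (fun j => if excluded_middle_informative (P (e j)) then e j else e j0).
  split; [|split].
  - intros j Hj. unfold ind. destruct excluded_middle_informative.
    + split; auto. apply Rmult_le_pos; [auto|left; apply Rinv_0_lt_compat; auto].
    + split; [unfold Rdiv; lra|auto].
  - unfold Rdiv. rewrite (rsum_ext N _ (fun j => / m * ind (P (e j)) (c j))) by (intros; ring).
    rewrite rsum_scal. fold m. field. lra.
  - intros x. unfold Rdiv. rewrite Rmult_comm, <- rsum_scal. apply rsum_ext. intros j Hj.
    unfold ind. destruct excluded_middle_informative; ring.
Qed.

End ConvexHull.

Section WeakStarClosure.
Variable X : Banach.
Implicit Types S C : (X -> R) -> Prop.

Lemma closure_mono S C (f : X -> R) :
  (forall g, S g -> C g) -> wstar_closure S f -> wstar_closure C f.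
Proof.
  intros H [Hf Hc]. split; auto. intros n xs eps He.
  destruct (Hc n xs eps He) as [g [Hg Hg2]]. exists g; auto.
Qed.

Lemma closure_incl S (f : X -> R) : in_dual f -> S f -> wstar_closure S f.
Proof.
  intros Hf Hs. split; auto. intros n xs eps He. exists f; split; auto.
  intros; rewrite Rminus_diag, Rabs_R0; auto.
Qed.

Lemma closure_closed S : wstar_closed (wstar_closure S).
Proof.
  intros f [Hf Hc]. split; auto. intros n xs eps He.
  destruct (Hc n xs (eps/2) ltac:(lra)) as [g [[Hg Hgc] Hg2]].
  destruct (Hgc n xs (eps/2) ltac:(lra)) as [h [Hh Hh2]].
  exists h; split; auto. intros i Hi. specialize (Hg2 i Hi); specialize (Hh2 i Hi).
  replace (f (xs i) - h (xs i)) with ((f (xs i) - g (xs i)) + (g (xs i) - h (xs i))) by ring.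
  eapply Rle_lt_trans; [apply Rabs_triang|]. lra.
Qed.

Lemma closure_bounded S (M : R) :
  (forall g, S g -> forall x, Rabs (g x) <= M * vnorm x) ->
  bounded_by (wstar_closure S) M.
Proof.
  intros HS g [Hg Hc]. split; auto. intros x.
  apply Rnot_lt_le; intro Hlt. set (e := Rabs (g x) - M * vnorm x).
  destruct (Hc 1%nat (fun _ => x) e ltac:(unfold e; lra)) as [h [Hh Hh2]].
  specialize (Hh2 0%nat ltac:(lia)). pose proof (HS h Hh x).
  pose proof (Rabs_triang_inv (g x) (h x)). unfold e in *; lra.
Qed.

(* Banach-Alaoglu, in net form: along an ultrafilter, a family eventually lying in a
   bounded weak*-closed set [C] converges pointwise to an element of [C]. *)
Lemma wstar_compact {I : Type} (U : (I -> Prop) -> Prop) (f : I -> X -> R) C (M : R) :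
  filter.UltraFilter U -> wstar_closed C -> bounded_by C M -> U (fun i => C (f i)) ->
  exists g, C g /\ forall x, converges U (fun i => f i x) (g x).
Proof.
  intros HU HC HB Hf.
  assert (Hex : forall x, exists l, converges U (fun i => f i x) l).
  { intro x. apply (ultra_limit_exists U _ (M * vnorm x) HU).
    apply (ev_mono U _ _ Hf). intros i Hi; apply (HB _ Hi). }
  set (g := fun x => proj1_sig (constructive_indefinite_description _ (Hex x))).
  assert (Hg : forall x, converges U (fun i => f i x) (g x)).
  { intro x; unfold g; destruct constructive_indefinite_description; auto. }
  assert (Hlin : U (fun i => in_dual (f i))).
  { apply (ev_mono U _ _ Hf). intros i Hi; apply (HB _ Hi). }
  exists g; split; auto. apply HC. split.
  - split; [|split].
    + intros x y. apply (converges_unique U (fun i => f i (vadd x y))); auto.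
      apply (converges_ext U (fun i => f i x + f i y)).
      * apply (ev_mono U _ _ Hlin). intros i Hi. symmetry; apply Hi.
      * apply (converges_plus U); auto.
    + intros a x. apply (converges_unique U (fun i => f i (vscal a x))); auto.
      apply (converges_ext U (fun i => a * f i x)).
      * apply (ev_mono U _ _ Hlin). intros i Hi. symmetry; apply Hi.
      * apply (converges_mul U); auto. apply (converges_const U).
    + exists M. intro x.
      apply (converges_le U (fun i => Rabs (f i x)) (fun _ => M * vnorm x)).
      * apply (ev_mono U _ _ Hf). intros i Hi; apply (HB _ Hi).
      * apply (converges_abs U); auto.
      * apply (converges_const U).
  - intros n xs eps He.
    destruct (ev_ex U _ (ev_and U _ _ Hf
       (ev_forall_lt U (fun j i => Rabs (f i (xs j) - g (xs j)) < eps) n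
                       (fun j _ => Hg (xs j) eps He)))) as [i [Hi1 Hi2]].
    exists (f i); split; auto. intros j Hj. rewrite Rabs_minus_sym; auto.
Qed.

End WeakStarClosure.

Lemma choice_on {A B : Type} (b0 : B) (D : A -> Prop) (P : A -> B -> Prop) :
  (forall a, D a -> exists b, P a b) -> exists f : A -> B, forall a, D a -> P a (f a).
Proof.
  intros H.
  assert (H' : forall a, exists b, D a -> P a b).
  { intros a. destruct (classic (D a)) as [Ha|Ha].
    - destruct (H a Ha) as [b Hb]. exists b; auto.
    - exists b0; tauto. }
  exists (fun a => proj1_sig (constructive_indefinite_description _ (H' a))).
  intros a Ha. destruct constructive_indefinite_description; auto.
Qed.

Definition near_on {X : Banach} (n : nat) (xs : nat -> X) (d : R) (f g : X -> R) : Prop :=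
  forall j, (j < n)%nat -> Rabs (f (xs j) - g (xs j)) < d.

Lemma hull_closure_transfer {X : Banach} (S C : (X -> R) -> Prop) (k : X -> R)
  (n : nat) (xs : nat -> X) (d : R) :
  0 < d -> wstar_closure (conv_hull S) k ->
  (forall e, S e -> exists c, C c /\ near_on n xs d e c) ->
  exists g, conv_hull C g /\ near_on n xs (2 * d) k g.
Proof.
  intros Hd [_ Hk] Hnear.
  destruct (Hk n xs d Hd) as [g [[N [c [e [Hce [Hc Hg]]]]] Hgk]].
  destruct (choice_on (fun _ => 0) (fun j => (j < N)%nat)
              (fun j cj => C cj /\ near_on n xs d (e j) cj)) as [cs Hcs].
  { intros j Hj. apply Hnear, Hce, Hj. }
  exists (fun x => rsum N (fun j => c j * cs j x)). split.
  - exists N, c, cs. split; [|split]; auto.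
    intros j Hj; split; [apply Hce, Hj|apply Hcs, Hj].
  - intros i Hi. specialize (Hgk i Hi). rewrite Hg in Hgk.
    assert (Hshift : Rabs (rsum N (fun j => c j * e j (xs i))
                           - rsum N (fun j => c j * cs j (xs i))) <= d).
    { apply convex_comb_close; auto.
      - intros j Hj; apply Hce, Hj.
      - intros j Hj. left. apply Hcs; auto. }
    replace (k (xs i) - rsum N (fun j => c j * cs j (xs i))) with
      ((k (xs i) - rsum N (fun j => c j * e j (xs i)))
       + (rsum N (fun j => c j * e j (xs i)) - rsum N (fun j => c j * cs j (xs i)))) by ring.
    eapply Rle_lt_trans; [apply Rabs_triang|]. lra.
Qed.

Lemma conv_hull_mono {X : Banach} (S C : (X -> R) -> Prop) (g : X -> R) :
  (forall e, S e -> C e) -> conv_hull S g -> conv_hull C g.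
Proof.
  intros HSC [n [c [e [He Hrest]]]]. exists n, c, e. split; auto.
  intros i Hi. destruct (He i Hi). split; auto.
Qed.

Section MinimalSupport.
Variable X : Banach.
Variable M : R.
Variable E : (X -> R) -> Prop.
Hypothesis E_closed : wstar_closed E.
Hypothesis E_bounded : bounded_by E M.

(* Compactness of [E] for a chain [G] of "removed" sets: the sets [E \ A], [A] in [G],
   decrease to [E \ U G], and every weak*-neighbourhood of the limit set already contains
   some [E \ A]. *)
Lemma chain_near (G : ((X -> R) -> Prop) -> Prop) :
  (exists A, G A) ->
  (forall A, G A -> wstar_closed (fun e => E e /\ ~ A e)) ->
  classical_sets.total_on G classical_sets.subset ->
  forall n xs d, 0 < d -> exists A, G A /\ forall e, E e -> ~ A e ->
    exists c, (E c /\ forall A', G A' -> ~ A' c) /\ near_on n xs d e c.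
Proof.
  intros [A0 HA0] Hcl Htot n xs d Hd. apply NNPP; intro Hn.
  (* otherwise every [E \ A] contains a point [f A] far from the limit set *)
  assert (Hbad : forall A, G A -> exists e, (E e /\ ~ A e) /\
            forall c, E c -> (forall A', G A' -> ~ A' c) -> ~ near_on n xs d e c).
  { intros A HA. apply NNPP; intro Hb. apply Hn. exists A; split; auto. intros e He HAe.
    apply NNPP; intro Hc. apply Hb. exists e; split; auto. intros c Hc1 Hc2 Hnear.
    apply Hc. exists c; auto. }
  destruct (choice_on (fun _ => 0) G _ Hbad) as [f Hf].
  (* the ultrafilter of "tails" A' containing A, for A in G *)
  set (tail := fun A A' => G A' /\ forall e, A e -> A' e).
  destruct (ultrafilter_on_base (fun b => exists A, G A /\ b = tail A)) as [U [HU HUtail]].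
  { exists (tail A0), A0; auto. }
  { intros b [A [HA ->]]. exists A. split; auto. }
  { intros b1 b2 [A1 [HA1 ->]] [A2 [HA2 ->]].
    destruct (Htot A1 A2 HA1 HA2) as [H12|H21].
    - exists (tail A2). split; [exists A2; auto|]. intros A' [HA' Hsub]. unfold tail; auto.
    - exists (tail A1). split; [exists A1; auto|]. intros A' [HA' Hsub]. unfold tail; auto. }
  assert (Hev : forall A, G A -> U (fun A' => E (f A') /\ ~ A (f A'))).
  { intros A HA. apply (ev_mono U (tail A)); [apply HUtail; exists A; auto|].
    intros A' [HA' Hsub]. destruct (Hf A' HA') as [[HE HnA] _]. split; auto. }
  assert (Hbd : forall A, bounded_by (fun e => E e /\ ~ A e) M)
    by (intros A g [Hg _]; apply E_bounded, Hg).
  destruct (wstar_compact X U f E M HU E_closed E_bounded)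
    as [es [Hes Hconv]].
  { apply (ev_mono U _ _ (Hev A0 HA0)). tauto. }
  assert (Hlim : forall A, G A -> ~ A es).
  { intros A HA. destruct (wstar_compact X U f _ M HU (Hcl A HA) (Hbd A) (Hev A HA))
      as [g [[_ Hg] Hgconv]].
    replace es with g; auto. apply functional_extensionality; intro x.
    apply (converges_unique U (fun A' => f A' x)); auto. }
  destruct (ev_ex U _ (ev_and U _ _ (HUtail (tail A0) (ex_intro _ A0 (conj HA0 eq_refl)))
      (ev_forall_lt U (fun j A' => Rabs (f A' (xs j) - es (xs j)) < d) n
                      (fun j _ => Hconv (xs j) d Hd)))) as [A' [[HA' _] Hclose]].
  exact (proj2 (Hf A' HA') es Hes Hlim Hclose).
Qed.

Variable k : X -> R.
Hypothesis k_in_hull : wstar_closed_conv_hull E k.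

Definition supports (C : (X -> R) -> Prop) : Prop :=
  wstar_closed C /\ (forall e, C e -> E e) /\ wstar_closure (conv_hull C) k.

Lemma supports_chain (F : ((X -> R) -> Prop) -> Prop) :
  (forall A, F A -> supports (fun e => E e /\ ~ A e)) ->
  classical_sets.total_on F classical_sets.subset ->
  supports (fun e => E e /\ ~ (exists2 A, F A & A e)).
Proof.
  intros HF Htot.
  (* add the empty set to the chain, so that it is nonempty *)
  set (G := fun A : (X -> R) -> Prop => F A \/ forall e, ~ A e).
  assert (HG : forall A, G A -> wstar_closure (conv_hull (fun e => E e /\ ~ A e)) k).
  { intros A [HA|Hempty]; [apply HF, HA|].
    apply (closure_mono X (conv_hull E)); [|exact k_in_hull].
    intros g. apply conv_hull_mono. intros e He; split; auto. }
  split; [|split].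
  - intros f Hf. split.
    + apply E_closed. eapply closure_mono; [|exact Hf]. intros g [Hg _]; exact Hg.
    + intros [A HA HAf]. assert (Hcl : wstar_closed (fun e => E e /\ ~ A e)) by apply HF, HA.
      apply (Hcl f); [|exact HAf]. eapply closure_mono; [|exact Hf].
      intros g [Hg Hng]. split; auto. intros HAg. apply Hng. exists A; auto.
  - tauto.
  - split; [exact (proj1 k_in_hull)|]. intros n xs eps Heps.
    destruct (chain_near G) with (d := eps / 2) (n := n) (xs := xs) as [A [HA Hnear]].
    + exists (fun _ => False). right; auto.
    + intros A [HA|Hempty]; [apply HF, HA|].
      intros f Hf. split; [|apply Hempty]. apply E_closed.
      eapply closure_mono; [|exact Hf]. intros g [Hg _]; exact Hg.
    + intros A1 A2 [H1|H1] [H2|H2].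
      * apply Htot; auto.
      * right. intros e He. exfalso; eapply H2, He.
      * left. intros e He. exfalso; eapply H1, He.
      * left. intros e He. exfalso; eapply H1, He.
    + lra.
    + destruct (hull_closure_transfer _ (fun e => E e /\ ~ (exists2 A, F A & A e)) k n xs (eps / 2)
                  ltac:(lra) (HG A HA)) as [g [Hg Hgk]].
      { intros e [He HAe]. destruct (Hnear e He HAe) as [c [[Hc HGc] Hce]].
        exists c. split; auto. split; auto. intros [A' HA' HA'c]. apply (HGc A'); auto. left; auto. }
      exists g. split; auto. intros j Hj. specialize (Hgk j Hj). lra.
Qed.

Lemma minimal_support :
  exists E', supports E' /\ forall C, supports C -> (forall e, C e -> E' e) -> forall e, E' e -> C e.
Proof.
  destruct (@classical_sets.Zorn_bigcup (X -> R) (fun A : (X -> R) -> Prop => supports (fun e => E e /\ ~ A e)))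
    as [A [HA Hmax]].
  { intros F HF Htot. apply supports_chain; auto. }
  exists (fun e => E e /\ ~ A e). split; auto. intros C HC HCA.
  set (B := fun e => ~ C e).
  assert (HCB : (fun e => E e /\ ~ B e) = C).
  { apply functional_extensionality; intro e. apply propositional_extensionality.
    unfold B. split; [intros [_ H]; apply NNPP, H|]. intros H; split; [apply HC, H|tauto]. }
  assert (HAB : forall e, A e -> B e) by (intros e HAe HCe; apply (HCA e HCe); auto).
  intros e [HEe HAe]. apply NNPP; intro HCe.
  apply (Hmax B); [split; [exact HAB|]|rewrite HCB; exact HC].
  intros HBA. apply HAe, HBA, HCe.
Qed.

End MinimalSupport.

Definition wstar_open {X : Banach} (O : (X -> R) -> Prop) : Prop :=
  forall f, O f -> exists n xs eps, 0 < eps /\ forall g, near_on n xs eps g f -> O g.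

Lemma wstar_open_and {X : Banach} (O : (X -> R) -> Prop) (y : X) (z r : R) :
  wstar_open O -> wstar_open (fun f => O f /\ Rabs (f y - z) < r).
Proof.
  intros HO f [Hf Hfr]. destruct (HO f Hf) as [n [xs [eps [He Hg]]]].
  set (d := r - Rabs (f y - z)).
  exists (S n), (fun j => if Nat.eqb j n then y else xs j), (Rmin eps d). split.
  { apply Rmin_glb_lt; unfold d; lra. }
  intros g Hc. split.
  - apply Hg. intros j Hj. specialize (Hc j ltac:(lia)). cbv beta in Hc.
    destruct (Nat.eqb_spec j n); [lia|]. eapply Rlt_le_trans; [apply Hc|apply Rmin_l].
  - specialize (Hc n ltac:(lia)). cbv beta in Hc. rewrite Nat.eqb_refl in Hc.
    assert (Rabs (g y - f y) < d) by (eapply Rlt_le_trans; [apply Hc|apply Rmin_r]).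
    replace (g y - z) with ((g y - f y) + (f y - z)) by ring.
    eapply Rle_lt_trans; [apply Rabs_triang|]. unfold d in *; lra.
Qed.

(* The functionals of norm at most [M - 1/(m+1)]; for [M] the supremum of the norms on [E],
   these levels cover [E] exactly when no element of [E] has maximal norm. *)
Definition level {X : Banach} (M : R) (m : nat) (e : X -> R) : Prop :=
  forall x, Rabs (e x) <= (M - / (INR m + 1)) * vnorm x.

Section Baire.
Variable X : Banach.
Variable M : R.
Variable E : (X -> R) -> Prop.
Hypothesis E_closed : wstar_closed E.
Hypothesis E_bounded : bounded_by E M.

Lemma avoid_level (m : nat) (O : (X -> R) -> Prop) (e : X -> R) :
  wstar_open O -> O e -> E e ->
  ~ (exists O', wstar_open O' /\ (exists e', O' e' /\ E e') /\
       forall e', O' e' -> E e' -> level M m e') ->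
  exists O' e', (wstar_open O' /\ O' e' /\ E e') /\ (forall f, O' f -> O f) /\
    exists y z r, 0 < r /\ (forall f, O' f -> Rabs (f y - z) < r) /\
                  (M - / (INR m + 1)) * vnorm y + 2 * r <= Rabs z.
Proof.
  intros HO HOe HEe Hint.
  assert (Hout : exists e', O e' /\ E e' /\ ~ level M m e').
  { apply NNPP; intro H. apply Hint. exists O. split; [auto|split; [exists e; auto|]].
    intros e' HOe' HEe'. apply NNPP; intro Hl. apply H. exists e'; auto. }
  destruct Hout as [e' [HOe' [HEe' Hnl]]].
  assert (Hy : exists y, (M - / (INR m + 1)) * vnorm y < Rabs (e' y)).
  { apply NNPP; intro H. apply Hnl. intros x. apply Rnot_lt_le; intro Hx; apply H; exists x; auto. }
  destruct Hy as [y Hy].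
  set (r := (Rabs (e' y) - (M - / (INR m + 1)) * vnorm y) / 2).
  exists (fun f => O f /\ Rabs (f y - e' y) < r), e'. split; [split; [|split]|split].
  - apply wstar_open_and, HO.
  - split; auto. rewrite Rminus_diag, Rabs_R0. unfold r; lra.
  - exact HEe'.
  - intros f [Hf _]; exact Hf.
  - exists y, (e' y), r. split; [unfold r; lra|split; [intros f [_ Hf]; exact Hf|unfold r; lra]].
Qed.

(* Baire category for the weak*-compact set [E]: if the closed levels cover [E], one of them
   has nonempty relative interior. *)
Lemma level_with_interior :
  (forall e, E e -> exists m, level M m e) -> (exists e0, E e0) ->
  exists m O, wstar_open O /\ (exists e, O e /\ E e) /\ forall e, O e -> E e -> level M m e.
Proof.
  intros Hcover [e0 He0]. apply NNPP; intro Hn.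
  (* states: an open set together with a point of [E] inside it *)
  set (valid := fun s : ((X -> R) -> Prop) * (X -> R) =>
                  wstar_open (fst s) /\ fst s (snd s) /\ E (snd s)).
  set (far := fun (m : nat) (s s' : ((X -> R) -> Prop) * (X -> R)) =>
    valid s' /\ (forall f, fst s' f -> fst s f) /\
    exists y z r, 0 < r /\ (forall f, fst s' f -> Rabs (f y - z) < r) /\
                  (M - / (INR m + 1)) * vnorm y + 2 * r <= Rabs z).
  destruct (choice_on ((fun _ => True), e0) (fun p => valid (snd p)) (fun p => far (fst p) (snd p)))
    as [next Hnext].
  { intros [m [O e]] [HO [HOe HEe]]. simpl in *.
    destruct (avoid_level m O e HO HOe HEe) as [O' [e' [Hval [Hsub Hyzr]]]].
    { intros Hint. apply Hn. exists m. exact Hint. }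
    exists (O', e'). split; [exact Hval|split; auto]. }
  set (sq := fix sq (m : nat) := match m with O => ((fun _ : X -> R => True), e0)
                                            | S m' => next (m', sq m') end).
  assert (Hstep : forall m, valid (sq m) /\ far m (sq m) (sq (S m))).
  { intros m. induction m as [|m [IH _]].
    - assert (Hv0 : valid (sq 0%nat)).
      { split; [|split; simpl; auto]. intros f _. exists 0%nat, (fun _ => vzero), 1.
        split; [lra|intros; exact I]. }
      split; [exact Hv0|exact (Hnext (0%nat, sq 0%nat) Hv0)].
    - pose proof (Hnext (m, sq m) IH) as [Hv _].
      split; [exact Hv|exact (Hnext (S m, sq (S m)) Hv)]. }
  assert (Hmono : forall m t, (m <= t)%nat -> forall f, fst (sq t) f -> fst (sq m) f).
  { intros m t Hmt. induction Hmt as [|t Hmt IH]; auto. intros f Hf.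
    apply IH, (proj1 (proj2 (proj2 (Hstep t)))), Hf. }
  (* a cluster point of the points of the states lies in no level *)
  destruct (ultrafilter_on_base (fun b => exists m, b = fun t => (m <= t)%nat))
    as [U [HU HUtail]].
  { exists (fun t => (0 <= t)%nat), 0%nat; auto. }
  { intros b [m ->]. exists m; auto. }
  { intros b1 b2 [m1 ->] [m2 ->]. exists (fun t => (Nat.max m1 m2 <= t)%nat).
    split; [exists (Nat.max m1 m2); auto|intros i Hi; split; lia]. }
  destruct (wstar_compact X U (fun t => snd (sq t)) E M HU E_closed E_bounded) as [e [He Hconv]].
  { apply (ev_always U). intros t. apply (Hstep t). }
  destruct (Hcover e He) as [m Hm].
  destruct (Hstep m) as [_ [_ [_ [y [z [r [Hr [Hyz Hgap]]]]]]]].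
  assert (Hb : Rabs (e y - z) <= r).
  { apply (converges_le U (fun t => Rabs (snd (sq t) y - z)) (fun _ => r)).
    - apply (ev_mono U (fun t => (S m <= t)%nat)); [apply HUtail; exists (S m); auto|].
      intros t Ht. left. apply Hyz, (Hmono (S m) t Ht), (proj1 (proj2 (proj1 (Hstep t)))).
    - apply (converges_abs U (fun t => snd (sq t) y - z)).
      apply (converges_plus U (fun t => snd (sq t) y) (fun _ => - z)); auto.
      apply (converges_const U).
    - apply (converges_const U). }
  specialize (Hm y). pose proof (Rabs_triang_inv z (e y)).
  rewrite Rabs_minus_sym in Hb. lra.
Qed.
End Baire.

(* Indices are pairs (finite set of test points, accuracy 1/(m+1)),
   directed by inclusion and increasing accuracy. *)
Lemma closure_net {X : Banach} (S : (X -> R) -> Prop) (k : X -> R) :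
  wstar_closure S k ->
  exists (I : Type) (U : (I -> Prop) -> Prop) (s : I -> X -> R),
    filter.UltraFilter U /\ (forall i, S (s i)) /\ forall x, converges U (fun i => s i x) (k x).
Proof.
  intros [_ Hk].
  set (tol := fun m : nat => / (INR m + 1)).
  assert (Htol : forall m, 0 < tol m)
    by (intros m; apply Rinv_0_lt_compat; pose proof (pos_INR m); lra).
  destruct (choice_on k (fun _ : list X * nat => True)
              (fun i g => S g /\ near_on (length (fst i)) (fun j => nth j (fst i) vzero)
                                         (tol (snd i)) k g)) as [s Hs].
  { intros [l m] _. apply Hk, Htol. }
  set (refines := fun (i i' : list X * nat) => incl (fst i) (fst i') /\ (snd i <= snd i')%nat).
  destruct (ultrafilter_on_base (fun b => exists i, b = refines i)) as [U [HU HUb]].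
  { exists (refines (nil, 0%nat)), (nil, 0%nat); auto. }
  { intros b [i ->]. exists i. split; [apply incl_refl|lia]. }
  { intros b1 b2 [[l1 m1] ->] [[l2 m2] ->]. exists (refines (l1 ++ l2, Nat.max m1 m2)).
    split; [eexists; eauto|]. intros [l m] [Hl Hm]; simpl in *.
    split; split; simpl; try lia.
    - intros x Hx. apply Hl, in_or_app; auto.
    - intros x Hx. apply Hl, in_or_app; auto. }
  exists (list X * nat)%type, U, s. split; [exact HU|split; [intros i; apply Hs; auto|]].
  intros x eps Heps.
  destruct (archimed_cor1 eps Heps) as [m [Hm Hm0]].
  apply (ev_mono U (refines (x :: nil, m))); [apply HUb; eauto|].
  intros [l m'] [Hl Hmm']; simpl in *.
  destruct (In_nth l x vzero (Hl x (in_eq x nil))) as [j [Hj Hjx]].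
  destruct (Hs (l, m') I) as [_ Hnear]. specialize (Hnear j Hj). simpl in Hnear.
  rewrite Hjx, Rabs_minus_sym in Hnear.
  assert (Htm : tol m' <= / INR m).
  { unfold tol. apply Rinv_le_contravar; [apply lt_0_INR; lia|].
    apply le_INR in Hmm'. lra. }
  lra.
Qed.

Section ConvexNets.
Variable X : Banach.
Variables (I : Type) (U : (I -> Prop) -> Prop).
Hypothesis U_ultra : filter.UltraFilter U.
Variables (S P : (X -> R) -> Prop) (M : R).
Hypothesis S_bounded : bounded_by S M.
Variables (N : I -> nat) (c : I -> nat -> R) (e : I -> nat -> X -> R).
Hypothesis convex : forall i j, (j < N i)%nat -> 0 <= c i j /\ S (e i j).
Hypothesis mass1 : forall i, rsum (N i) (c i) = 1.
Variable k : X -> R.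
Hypothesis limit_k :
  forall x, converges U (fun i => rsum (N i) (fun j => c i j * e i j x)) (k x).

Definition mass (i : I) : R := rsum (N i) (fun j => ind (P (e i j)) (c i j)).

Lemma mass_complement (i : I) :
  rsum (N i) (fun j => ind (~ P (e i j)) (c i j)) = 1 - mass i.
Proof. rewrite <- (mass1 i), (rsum_split (N i) (fun j => P (e i j)) (c i)). unfold mass; ring. Qed.

Lemma mass_bounds (i : I) : 0 <= mass i <= 1.
Proof.
  assert (Hpos : forall Q : Prop, forall j, (j < N i)%nat -> 0 <= ind Q (c i j)).
  { intros Q j Hj. unfold ind. destruct excluded_middle_informative; [apply convex, Hj|lra]. }
  pose proof (mass_complement i).
  split; [apply rsum_nonneg; intros j Hj; apply Hpos, Hj|].
  assert (0 <= rsum (N i) (fun j => ind (~ P (e i j)) (c i j))); [|lra].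
  apply rsum_nonneg. intros j Hj; apply Hpos, Hj.
Qed.

Lemma mass_bound (m : nat) (L : R) :
  (forall f, S f -> P f -> level M m f) -> converges U mass L ->
  forall x, Rabs (k x) <= (M - L / (INR m + 1)) * vnorm x.
Proof.
  intros Hlevel HL x.
  set (delta := / (INR m + 1) * vnorm x).
  assert (Hbd : forall i, Rabs (rsum (N i) (fun j => c i j * e i j x))
                          <= M * vnorm x + (- delta) * mass i).
  { intros i. eapply Rle_trans; [apply rsum_abs|].
    apply Rle_trans with
      (rsum (N i) (fun j => (M * vnorm x) * c i j + (- delta) * ind (P (e i j)) (c i j))).
    - apply rsum_le. intros j Hj. destruct (convex i j Hj) as [Hc HS].
      rewrite Rabs_mult, Rabs_right by lra.
      pose proof (proj2 (S_bounded _ HS) x) as HM.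
      unfold ind. destruct excluded_middle_informative as [HP|HP].
      + pose proof (Hlevel _ HS HP x) as Hm.
        assert (c i j * Rabs (e i j x) <= c i j * ((M - / (INR m + 1)) * vnorm x))
          by (apply Rmult_le_compat_l; auto).
        unfold delta; nra.
      + assert (c i j * Rabs (e i j x) <= c i j * (M * vnorm x))
          by (apply Rmult_le_compat_l; auto).
        nra.
    - rewrite rsum_plus, !rsum_scal, mass1. unfold mass. lra. }
  apply (converges_le U (fun i => Rabs (rsum (N i) (fun j => c i j * e i j x)))
                        (fun i => M * vnorm x + (- delta) * mass i)).
  - apply (ev_always U). exact Hbd.
  - apply (converges_abs U), limit_k.
  - replace ((M - L / (INR m + 1)) * vnorm x) with (M * vnorm x + (- delta) * L)
      by (unfold delta, Rdiv; ring).
    apply (converges_plus U); [apply (converges_const U)|].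
    apply (converges_mul U (fun _ => - delta)); [apply (converges_const U)|exact HL].
Qed.

(* If the mass tends to [0], [k] is already a limit of convex combinations of the points not
   charged by [P]: renormalize the uncharged part of each combination. *)
Lemma mass_vanishing :
  converges U mass 0 -> wstar_closure (conv_hull (fun f => S f /\ ~ P f)) k.
Proof.
  intros HL.
  set (S' := fun f => S f /\ ~ P f).
  set (b := fun i x => rsum (N i) (fun j => ind (~ P (e i j)) (c i j * e i j x)) / (1 - mass i)).
  assert (Hsmall : U (fun i => mass i < 1/2)).
  { apply (ev_mono U _ _ (HL (1/2) ltac:(lra))). intros i Hi.
    apply Rabs_def2 in Hi. lra. }
  assert (HS'bd : bounded_by S' M) by (intros f [Hf _]; apply S_bounded, Hf).
  assert (Hb : forall i, mass i < 1/2 -> wstar_closure (conv_hull S') (b i)).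
  { intros i Hi. assert (Hc : conv_hull S' (b i)).
    { unfold b. rewrite <- mass_complement.
      apply (conv_hull_restrict X S' (fun f => ~ P f) (N i) (c i) (e i)).
      - intros j Hj; apply convex, Hj.
      - intros j Hj HnP. split; [apply convex, Hj|exact HnP].
      - rewrite mass_complement; lra. }
    apply closure_incl; [|exact Hc]. apply (conv_hull_bounded X S' M HS'bd _ Hc). }
  destruct (wstar_compact X U b (wstar_closure (conv_hull S')) M U_ultra (closure_closed X _)
              (closure_bounded X _ M (fun g Hg => proj2 (conv_hull_bounded X S' M HS'bd g Hg)))
              (ev_mono U _ _ Hsmall Hb)) as [b0 [Hb0 Hbconv]].
  replace k with b0; [exact Hb0|]. apply functional_extensionality; intro x.
  (* the charged part [A i] of the combination tends both to [k x - b0 x] and to 0 *)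
  set (A := fun i => rsum (N i) (fun j => ind (P (e i j)) (c i j * e i j x))).
  assert (HAeq : U (fun i => rsum (N i) (fun j => c i j * e i j x)
                             + (-1) * ((1 - mass i) * b i x) = A i)).
  { apply (ev_mono U _ _ Hsmall). intros i Hi. unfold b, A.
    rewrite (rsum_split (N i) (fun j => P (e i j)) (fun j => c i j * e i j x)). field. lra. }
  assert (HAlim : converges U A (k x + (-1) * ((1 - 0) * b0 x))).
  { apply (converges_ext U _ _ _ HAeq).
    apply (converges_plus U); [apply limit_k|].
    apply (converges_mul U (fun _ => -1)); [apply (converges_const U)|].
    apply (converges_mul U); [|apply Hbconv].
    replace (1 - 0) with (1 + (-1) * 0) by ring.
    apply (converges_ext U (fun i => 1 + (-1) * mass i)); [apply (ev_always U); intros; ring|].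
    apply (converges_plus U); [apply (converges_const U)|].
    apply (converges_mul U (fun _ => -1)); [apply (converges_const U)|exact HL]. }
  assert (HAbd : forall i, Rabs (A i) <= (M * vnorm x) * mass i).
  { intros i. unfold A, mass. eapply Rle_trans; [apply rsum_abs|]. rewrite <- rsum_scal.
    apply rsum_le. intros j Hj. destruct (convex i j Hj) as [Hc HS]. unfold ind.
    destruct excluded_middle_informative; [|rewrite Rabs_R0; lra].
    rewrite Rabs_mult, Rabs_right by lra.
    pose proof (proj2 (S_bounded _ HS) x).
    assert (c i j * Rabs (e i j x) <= c i j * (M * vnorm x)) by (apply Rmult_le_compat_l; auto).
    nra. }
  assert (Habs : Rabs (k x + (-1) * ((1 - 0) * b0 x)) <= 0).
  { apply (converges_le U (fun i => Rabs (A i)) (fun i => (M * vnorm x) * mass i)).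
    - apply (ev_always U). exact HAbd.
    - apply (converges_abs U), HAlim.
    - replace 0 with (M * vnorm x * 0) by ring.
      apply (converges_mul U); [apply (converges_const U)|exact HL]. }
  pose proof (Rabs_pos (k x + (-1) * ((1 - 0) * b0 x))).
  assert (Hz : k x + (-1) * ((1 - 0) * b0 x) = 0).
  { apply NNPP; intro Hnz. apply Rabs_pos_lt in Hnz. lra. }
  lra.
Qed.

End ConvexNets.

Lemma hull_closure_nonempty {X : Banach} (S : (X -> R) -> Prop) (k : X -> R) :
  wstar_closure (conv_hull S) k -> exists e, S e.
Proof.
  intros [_ Hk].
  destruct (Hk 0%nat (fun _ => vzero) 1 ltac:(lra)) as [g [[N [c [e [He [Hc _]]]]] _]].
  destruct N as [|N]; [simpl in Hc; lra|]. exists (e 0%nat). apply (He 0%nat); lia.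
Qed.

Lemma finite_slack (n : nat) (a : nat -> R) (b : R) :
  (forall j, (j < n)%nat -> a j < b) -> exists d, 0 < d /\ forall j, (j < n)%nat -> a j + d < b.
Proof.
  induction n as [|n IH]; intros H.
  - exists 1; split; [lra|]. intros; lia.
  - destruct IH as [d [Hd Hd2]]; [intros j Hj; apply H; lia|].
    assert (Hn := H n ltac:(lia)).
    exists (Rmin d ((b - a n) / 2)). split; [apply Rmin_glb_lt; lra|].
    intros j Hj. pose proof (Rmin_l d ((b - a n) / 2)). pose proof (Rmin_r d ((b - a n) / 2)).
    destruct (Nat.eq_dec j n) as [->|Hne]; [lra|]. specialize (Hd2 j ltac:(lia)). lra.
Qed.

Lemma far_closed {X : Banach} (C : (X -> R) -> Prop) (e0 : X -> R) (n : nat) (xs : nat -> X) (r : R) :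
  wstar_closed C ->
  wstar_closed (fun f => C f /\ exists j, (j < n)%nat /\ r <= Rabs (f (xs j) - e0 (xs j))).
Proof.
  intros HC f Hf. split.
  - apply HC. eapply closure_mono; [|exact Hf]. intros g [Hg _]; exact Hg.
  - apply NNPP; intro Hn.
    assert (Hlt : forall j, (j < n)%nat -> Rabs (f (xs j) - e0 (xs j)) < r).
    { intros j Hj. apply Rnot_le_lt; intro H; apply Hn; exists j; auto. }
    destruct (finite_slack n _ _ Hlt) as [d [Hd Hd2]].
    destruct (proj2 Hf n xs d Hd) as [g [[_ [j [Hj Hgj]]] Hg2]].
    specialize (Hd2 j Hj). specialize (Hg2 j Hj).
    assert (Rabs (g (xs j) - e0 (xs j))
            <= Rabs (f (xs j) - g (xs j)) + Rabs (f (xs j) - e0 (xs j))).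
    { replace (g (xs j) - e0 (xs j))
        with (- (f (xs j) - g (xs j)) + (f (xs j) - e0 (xs j))) by ring.
      eapply Rle_trans; [apply Rabs_triang|]. rewrite Rabs_Ropp; lra. }
    lra.
Qed.

Section NormGap.
Variable X : Banach.
Variable M : R.
Variable E : (X -> R) -> Prop.
Hypothesis E_closed : wstar_closed E.
Hypothesis E_bounded : bounded_by E M.
Hypothesis E_levels : forall e, E e -> exists m, level M m e.
Variable k : X -> R.
Hypothesis k_in_hull : wstar_closure (conv_hull E) k.
Hypothesis E_minimal : forall C, wstar_closed C -> (forall e, C e -> E e) ->
  wstar_closure (conv_hull C) k -> forall e, E e -> C e.

Theorem norm_gap : exists d, 0 < d /\ forall x, Rabs (k x) <= (M - d) * vnorm x.
Proof.
  (* a basic neighbourhood [P] of a point [e0] of [E] inside which [E] lies in a level *)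
  destruct (level_with_interior X M E E_closed E_bounded E_levels
              (hull_closure_nonempty E k k_in_hull)) as [m [O [HO [[e0 [HOe0 HEe0]] HOm]]]].
  destruct (HO e0 HOe0) as [n0 [xs0 [eps0 [Heps0 HnearO]]]].
  set (P := fun f => near_on n0 xs0 eps0 f e0).
  (* by minimality, [k] is not in the hull of the points of [E] away from [e0] *)
  set (B := fun f => E f /\ exists j, (j < n0)%nat /\ eps0 / 2 <= Rabs (f (xs0 j) - e0 (xs0 j))).
  assert (HnotB : ~ wstar_closure (conv_hull B) k).
  { intros HkB.
    assert (HB : B e0) by (apply E_minimal; auto; [apply far_closed, E_closed|intros e [He _]; exact He]).
    destruct HB as [_ [j [Hj Hj2]]]. rewrite Rminus_diag, Rabs_R0 in Hj2. lra. }
  destruct (closure_net (conv_hull E) k k_in_hull) as [Idx [U [g [HU [Hg Hgk]]]]].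
  destruct (choice_on (0%nat, fun _ => 0, fun _ _ => 0) (fun _ : Idx => True)
      (fun i t => (forall j, (j < fst (fst t))%nat -> 0 <= snd (fst t) j /\ E (snd t j)) /\
                  rsum (fst (fst t)) (snd (fst t)) = 1 /\
                  forall x, g i x = rsum (fst (fst t)) (fun j => snd (fst t) j * snd t j x)))
    as [rep Hrep].
  { intros i _. destruct (Hg i) as [N [c [e He]]]. exists (N, c, e). exact He. }
  set (N := fun i => fst (fst (rep i))). set (c := fun i => snd (fst (rep i))).
  set (e := fun i => snd (rep i)).
  assert (Hconvex : forall i j, (j < N i)%nat -> 0 <= c i j /\ E (e i j))
    by (intros i; apply (Hrep i I)).
  assert (Hmass1 : forall i, rsum (N i) (c i) = 1) by (intros i; apply (Hrep i I)).
  assert (Hlim : forall x, converges U (fun i => rsum (N i) (fun j => c i j * e i j x)) (k x)).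
  { intros x. apply (converges_ext U (fun i => g i x)); [|apply Hgk].
    apply (ev_always U). intros i. apply (Hrep i I). }
  pose proof (mass_bounds X Idx E P N c e Hconvex Hmass1) as Hbounds.
  destruct (ultra_limit_exists U (mass X Idx P N c e) 1 HU) as [L HL].
  { apply (ev_always U). intros i. specialize (Hbounds i). rewrite Rabs_right; lra. }
  assert (HL0 : 0 <= L).
  { apply (converges_le U (fun _ => 0) (mass X Idx P N c e));
      [apply (ev_always U); apply Hbounds|apply (converges_const U)|exact HL]. }
  destruct (Rle_lt_or_eq_dec 0 L HL0) as [HLpos|HLzero].
  - (* positive mass near [e0] lowers the norm by [L/(m+1)] *)
    exists (L / (INR m + 1)). split; [apply Rdiv_lt_0_compat; [lra|pose proof (pos_INR m); lra]|].
    apply (mass_bound X Idx U HU E P M E_bounded N c e Hconvex Hmass1 k Hlim m L); [|exact HL].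
    intros f Hf HPf. apply HOm; auto.
  - (* vanishing mass near [e0] would put [k] in the hull of [B] *)
    subst L. exfalso. apply HnotB.
    eapply closure_mono; [|exact (mass_vanishing X Idx U HU E P M E_bounded N c e Hconvex Hmass1 k Hlim HL)].
    intros f Hf. eapply conv_hull_mono; [|exact Hf].
    intros f' [Hf' HnP]. split; auto.
    apply NNPP; intro Hn. apply HnP. intros j Hj. apply Rnot_le_lt; intro Hle.
    apply Hn. exists j. split; auto. lra.
Qed.

End NormGap.

Lemma below_in_level {X : Banach} (M : R) (e : X -> R) :
  in_dual e -> dnorm e < M -> exists m, level M m e.
Proof.
  intros He Hlt. destruct (INR_archimed (M - dnorm e) 1 ltac:(lra)) as [m Hm].
  exists m. intros x.
  assert (Hm' : / (INR m + 1) < M - dnorm e).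
  { pose proof (pos_INR m). apply (Rmult_lt_reg_l (INR m + 1)); [lra|].
    rewrite Rinv_r by lra. nra. }
  eapply Rle_trans; [apply dnorm_bound; auto|].
  apply Rmult_le_compat_r; [apply vnorm_nonneg|lra].
Qed.

Lemma hull_norm_sup {X : Banach} (E : (X -> R) -> Prop) (M : R) :
  (forall e, E e -> in_dual e) ->
  is_lub (fun t => exists e, E e /\ t = dnorm e) M ->
  is_lub (fun t => exists k, wstar_closed_conv_hull E k /\ t = dnorm k) M.
Proof.
  intros Hdual [HM1 HM2]. split.
  - intros t [k [Hk ->]].
    assert (HEbd : bounded_by E M).
    { intros e He. split; [apply Hdual, He|]. intros x.
      eapply Rle_trans; [apply dnorm_bound, Hdual, He|].
      apply Rmult_le_compat_r; [apply vnorm_nonneg|]. apply HM1. exists e; auto. }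
    destruct (closure_bounded X _ M (fun g Hg => proj2 (conv_hull_bounded X E M HEbd g Hg)) k Hk)
      as [Hkd Hkb].
    destruct (hull_closure_nonempty E k Hk) as [e He].
    apply dnorm_le; auto.
    apply Rle_trans with (dnorm e); [apply dnorm_nonneg, Hdual, He|apply HM1; exists e; auto].
  - intros u Hu. apply HM2. intros t [e [He ->]]. apply Hu. exists e; split; auto.
    apply closure_incl; [apply Hdual, He|]. apply conv_hull_single, He.
Qed.

Lemma norm_sup_unattained {X : Banach} (E : (X -> R) -> Prop) (e1 : X -> R) :
  dual_bounded E -> ~ has_max_length E -> E e1 ->
  exists M, is_lub (fun t => exists e, E e /\ t = dnorm e) M /\ forall e, E e -> dnorm e < M.
Proof.
  intros [M0 HM0] Hnomax He1.
  destruct (completeness (fun t => exists e, E e /\ t = dnorm e)) as [M HM].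
  { exists M0. intros t [e [He ->]]. auto. }
  { exists (dnorm e1), e1; auto. }
  exists M. split; [exact HM|]. intros e He.
  destruct (Rle_lt_or_eq_dec _ _ (proj1 HM _ (ex_intro _ e (conj He eq_refl)))) as [H|H]; auto.
  exfalso; apply Hnomax. exists e; split; auto. rewrite (sup_set_lub _ M HM); auto.
Qed.

Lemma dnorm_lt_of_gap {X : Banach} (k : X -> R) (M d : R) :
  in_dual k -> 0 < M -> 0 < d -> (forall x, Rabs (k x) <= (M - d) * vnorm x) -> dnorm k < M.
Proof.
  intros Hk HM Hd Hkd.
  (* shrink the gap so that the bound stays nonnegative *)
  set (d' := Rmin d (M / 2)).
  assert (Hd' : 0 < d') by (apply Rmin_glb_lt; lra).
  assert (Hle : dnorm k <= M - d').
  { apply dnorm_le; [exact Hk|pose proof (Rmin_r d (M / 2)); unfold d'; lra|].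
    intros x. eapply Rle_trans; [apply Hkd|].
    apply Rmult_le_compat_r; [apply vnorm_nonneg|pose proof (Rmin_l d (M / 2)); unfold d'; lra]. }
  lra.
Qed.

Theorem theorem1 (X : Banach) (E : (X -> R) -> Prop) :
  infinite_dimensional X ->
  dual_subset E ->
  wstar_closed E ->
  dual_bounded E ->
  ~ has_max_length E ->
  ~ has_max_length (wstar_closed_conv_hull E).
Proof.
  intros _ Hdual Hcl Hbd Hnomax [k [Hk Hkmax]].
  destruct (hull_closure_nonempty E k Hk) as [e1 He1].
  destruct (norm_sup_unattained E e1 Hbd Hnomax He1) as [M [HM Hbelow]].
  assert (HMpos : 0 < M)
    by (pose proof (dnorm_nonneg X e1 (Hdual e1 He1)); pose proof (Hbelow e1 He1); lra).
  assert (HEbd : bounded_by E M).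
  { intros e He. split; [apply Hdual, He|]. intros x.
    eapply Rle_trans; [apply dnorm_bound, Hdual, He|].
    apply Rmult_le_compat_r; [apply vnorm_nonneg|left; apply Hbelow, He]. }
  destruct (minimal_support X M E Hcl HEbd k Hk) as [E' [[HE'cl [HE'E Hk']] HE'min]].
  assert (HE'minimal : forall C, wstar_closed C -> (forall e, C e -> E' e) ->
                         wstar_closure (conv_hull C) k -> forall e, E' e -> C e).
  { intros C HCcl HCE' HkC. apply HE'min; auto.
    split; [exact HCcl|split; [intros e He; apply HE'E, HCE', He|exact HkC]]. }
  destruct (norm_gap X M E' HE'cl (fun e He => HEbd e (HE'E e He))
              (fun e He => below_in_level M e (Hdual e (HE'E e He)) (Hbelow e (HE'E e He)))
              k Hk' HE'minimal) as [d [Hd Hkd]].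
  (* but the supremum of the norms on K is M, attained at k *)
  pose proof (dnorm_lt_of_gap k M d (proj1 Hk) HMpos Hd Hkd).
  rewrite (sup_set_lub _ M (hull_norm_sup E M Hdual HM)) in Hkmax. lra.
Qed.
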